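(* Let $e_1,\dots,e_T\in\mathbb{R}^d$, $E=[e_1,\dots,e_T]$, $T_0\in\{2,\dots,T\}$, and let $C=\operatorname{conv}\{e_t:t\in\{2,\dots,T\}\setminus\{T_0\}\}$ and $\gamma=\operatorname{dist}(e_{T_0},C)$. For any attention vector $a\in\mathbb{R}^T$ with $a_1=0$, $a_t\ge0$, $\sum_t a_t=1$ (in particular for $a=a(w)$ the shifted-softmax attention of any parameter $w$), let $r=Ea-e_{T_0}$. Then there exists a constant $K>0$ (independent of $a$) such that $$(1-a_{T_0})K\ge\|r\|\ge(1-a_{T_0})\gamma.$$ In particular, if $\gamma>0$ then along any family of parameters the per-sample squared error $\frac12\|r\|^2$ tends to $0$ if and only if $a_{T_0}\to1$, and the squared loss has no finite-norm minimizer achieving zero loss.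
   Context: The shifted-softmax attention of a parameter $w$ is $a_1(w)=0$, $a_{t+1}(w)=\exp(w^\top x_t)/\sum_{s=1}^{T-1}\exp(w^\top x_s)$ for $t=1,\dots,T-1$, where $x_t$ are fixed feature vectors; such attention vectors always have $a_{T_0}<1$. *)

From HB Require Import structures.
From mathcomp Require Import all_boot all_order all_algebra.
From mathcomp Require Import all_classical all_reals all_analysis.
Set Implicit Arguments. Unset Strict Implicit. Unset Printing Implicit Defensive.
Import Order.TTheory GRing.Theory Num.Theory.
Local Open Scope classical_set_scope.
Local Open Scope ring_scope.

(* Indices are 0-based: paper index t in {1..T} is the ordinal t-1 : 'I_T.
   So the paper's a_1 is [a ord0]-like index 0, and T0 in {2..T} is an
   ordinal t0 with 0 < t0. *)

Definition dotv (R : realType) (n : nat) (u v : 'rV[R]_n) : R :=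
  \sum_(i < n) u ord0 i * v ord0 i.
Definition enorm (R : realType) (n : nat) (u : 'rV[R]_n) : R :=
  Num.sqrt (dotv u u).

Definition is_attention (R : realType) (T : nat) (a : 'I_T -> R) : Prop :=
  (forall t : 'I_T, nat_of_ord t = 0%N -> a t = 0) /\
  (forall t, 0 <= a t) /\ \sum_(t < T) a t = 1.

Definition Emul (R : realType) (d T : nat) (e : 'I_T -> 'rV[R]_d)
  (a : 'I_T -> R) : 'rV[R]_d := \sum_(t < T) a t *: e t.
Definition resid (R : realType) (d T : nat) (e : 'I_T -> 'rV[R]_d)
  (t0 : 'I_T) (a : 'I_T -> R) : 'rV[R]_d := Emul e a - e t0.

Definition hull_index (T : nat) (t0 : 'I_T) (t : 'I_T) : bool :=
  (nat_of_ord t != 0%N) && (t != t0).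

Definition convC (R : realType) (d T : nat) (e : 'I_T -> 'rV[R]_d)
  (t0 : 'I_T) : set 'rV[R]_d :=
  [set c | exists lam : 'I_T -> R,
     (forall t, 0 <= lam t) /\ (forall t, ~~ hull_index t0 t -> lam t = 0) /\
     \sum_(t < T) lam t = 1 /\ c = \sum_(t < T) lam t *: e t].

Definition gamma (R : realType) (d T : nat) (e : 'I_T -> 'rV[R]_d)
  (t0 : 'I_T) : R :=
  inf [set enorm (e t0 - c) | c in convC e t0].

(* Shifted-softmax attention: x : nat -> 'rV_p with x s (s = 0..T-2) the
   paper's x_{s+1}; a(w) at 0-based index 0 is 0, and at 0-based index
   t >= 1 equals exp(w.x_t)/sum_{s} exp(w.x_s) (paper index t+1). *)
Definition softmax_att (R : realType) (p T : nat) (x : nat -> 'rV[R]_p)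
  (w : 'rV[R]_p) (t : 'I_T) : R :=
  if nat_of_ord t == 0%N then 0
  else expR (dotv w (x (nat_of_ord t).-1)) /
       \sum_(s < T.-1) expR (dotv w (x (nat_of_ord s))).

Definition sqerr (R : realType) (d T : nat) (e : 'I_T -> 'rV[R]_d)
  (t0 : 'I_T) (a : 'I_T -> R) : R := (enorm (resid e t0 a)) ^+ 2 / 2.

From Pilot Require Import Defs.
From HB Require Import structures.
From mathcomp Require Import all_boot all_order all_algebra.
From mathcomp Require Import all_classical all_reals all_analysis.
From mathcomp Require Import ring.
Set Implicit Arguments. Unset Strict Implicit. Unset Printing Implicit Defensive.
Import Order.TTheory GRing.Theory Num.Theory numFieldNormedType.Exports.
Local Open Scope classical_set_scope.
Local Open Scope ring_scope.

(* Off T0 the attention weights sum to 1 - a_T0, and r = sum_{t <> T0} a_t (e_t - e_T0);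
   bounding each e_t - e_T0 coordinatewise gives the upper bound.  When a_T0 < 1,
   renormalising these weights by 1/(1 - a_T0) yields a point c of C with
   r = (1 - a_T0)(c - e_T0), hence the lower bound.  Both bounds are linear in
   1 - a_T0, so the loss vanishes in the limit exactly when a_T0 -> 1.  If gamma > 0
   then C is nonempty (the infimum of the empty set is 0), so softmax puts positive
   weight on some index of C and a_T0 < 1 for every parameter. *)

Section Convergence.
Context {T : Type} {F : set_system T} {FF : Filter F} {R : realType}.
Implicit Types u v : T -> R.

Lemma cvg0_linear_bounds u v (k K : R) : 0 < k -> (forall x, 0 <= u x) ->
  (forall x, u x * k <= v x <= u x * K) -> v @ F --> 0 <-> u @ F --> 0.
Proof.
move=> k_gt0 u_ge0 uv; split => [v0|u0].
- apply: (@squeeze_cvgr _ _ _ _ (fun=> 0) (fun x => v x / k)).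
  + apply: nearW => x; rewrite u_ge0 /= ler_pdivlMr //.
    by case/andP: (uv x).
  + exact: cvg_cst.
  + by rewrite -(mul0r k^-1); apply: cvgMr_tmp.
- apply: (@squeeze_cvgr _ _ _ _ (fun x => u x * k) (fun x => u x * K)).
  + exact: nearW.
  + by rewrite -(mul0r k); apply: cvgMr_tmp.
  + by rewrite -(mul0r K); apply: cvgMr_tmp.
Qed.

Lemma sqr_cvg0P v : (fun x => v x ^+ 2) @ F --> 0 <-> v @ F --> 0.
Proof.
split => [v2|v0].
- apply/norm_cvg0P; under eq_fun do rewrite -sqrtr_sqr.
  by rewrite -sqrtr0; apply: (cvg_comp _ _ v2); exact: sqrt_continuous.
- by rewrite -(mulr0 0); under eq_fun do rewrite expr2; apply: cvgM.
Qed.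

Lemma rsubr_cvg0 v (l : R) : (fun x => l - v x) @ F --> 0 <-> v @ F --> l.
Proof.
have -> : (fun x => l - v x) = - (fun x => v x - l).
  by apply/funext => x; rewrite /= opprB.
by rewrite -{1}oppr0 cvgNP subr_cvg0.
Qed.

End Convergence.

Section EuclideanNorm.
Variables (R : realType) (d : nat).
Implicit Types u : 'rV[R]_d.

Lemma enorm_ge0 u : 0 <= enorm u.
Proof. exact: sqrtr_ge0. Qed.

Lemma enormZ (k : R) u : enorm (k *: u) = `|k| * enorm u.
Proof.
rewrite /enorm /dotv -sqrtr_sqr -sqrtrM ?sqr_ge0 // mulr_sumr.
by congr Num.sqrt; apply: eq_bigr => i _; rewrite !mxE; ring.
Qed.

Lemma enormN u : enorm (- u) = enorm u.
Proof. by rewrite -scaleN1r enormZ normrN normr1 mul1r. Qed.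

Lemma enorm_le_coord u (B : R) :
  0 <= B -> (forall i, `|u ord0 i| <= B) -> enorm u <= Num.sqrt d%:R * B.
Proof.
move=> B_ge0 uB; rewrite -(ger0_norm B_ge0) -sqrtr_sqr -sqrtrM ?ler0n //.
rewrite ler_sqrt ?mulr_ge0 ?ler0n ?sqr_ge0 //.
rewrite (_ : d%:R * _ = \sum_(i < d) B ^+ 2); last first.
  by rewrite sumr_const card_ord mulr_natl.
apply: ler_sum => i _.
by rewrite -expr2 -real_normK ?num_real // lerXn2r ?nnegrE ?normr_ge0.
Qed.

End EuclideanNorm.

Section Attention.
Variables (R : realType) (T : nat) (a : 'I_T -> R).
Hypothesis a_att : is_attention a.

Lemma attention_ge0 t : 0 <= a t.
Proof. by case: a_att => _ []. Qed.

Lemma attention_sum_neq (t0 : 'I_T) : \sum_(t | t != t0) a t = 1 - a t0.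
Proof. by case: a_att => _ [_ <-]; rewrite [in RHS](bigD1 t0) //= addrC addrK. Qed.

Lemma attention_le1 t : a t <= 1.
Proof.
by rewrite -subr_ge0 -attention_sum_neq; apply: sumr_ge0 => *; apply: attention_ge0.
Qed.

Lemma attention_lt1 (t0 t1 : 'I_T) : t1 != t0 -> 0 < a t1 -> a t0 < 1.
Proof.
move=> t1_neq_t0 a_t1_gt0; rewrite -subr_gt0 -attention_sum_neq (bigD1 t1) //=.
by rewrite ltr_pwDl // sumr_ge0 // => *; apply: attention_ge0.
Qed.

End Attention.

Lemma ler_sum_term (R : numDomainType) (I : finType) (F : I -> R) i :
  (forall j, 0 <= F j) -> F i <= \sum_j F j.
Proof. by move=> F_ge0; rewrite (bigD1 i) //= lerDl sumr_ge0. Qed.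

Section Residual.
Variables (R : realType) (d T : nat) (e : 'I_T -> 'rV[R]_d) (t0 : 'I_T).

Lemma gamma_le_dist c : Defs.convC e t0 c -> gamma e t0 <= enorm (e t0 - c).
Proof.
move=> Cc; apply: ge_inf; last by exists c.
by exists 0 => _ [c' _ <-]; apply: enorm_ge0.
Qed.

Lemma gamma_gt0_hull_index : 0 < gamma e t0 -> exists t, hull_index t0 t.
Proof.
apply: contraPP => no_index; rewrite /gamma.
suff -> : Defs.convC e t0 = set0 by rewrite image_set0 inf0 ltxx.
apply/seteqP; split => // c [lam [_ [lam0 [lam_sum1 _]]]].
move: lam_sum1; rewrite big1 => [/esym/eqP|t _]; first by rewrite oner_eq0.
by apply: lam0; apply/negP => t_index; apply: no_index; exists t.
Qed.

Definition coord_spread : R :=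
  \sum_(t < T) \sum_(j < d) `|e t ord0 j - e t0 ord0 j|.

Lemma coord_spread_ge0 : 0 <= coord_spread.
Proof. by do 2![apply: sumr_ge0 => ? _]. Qed.

Lemma coord_le_spread t j : `|e t ord0 j - e t0 ord0 j| <= coord_spread.
Proof.
pose row_spread t := \sum_(j < d) `|e t ord0 j - e t0 ord0 j|.
have row_le : `|e t ord0 j - e t0 ord0 j| <= row_spread t by apply: ler_sum_term.
by apply: le_trans row_le (ler_sum_term _ _) => t'; apply: sumr_ge0.
Qed.

Variable a : 'I_T -> R.
Hypothesis a_att : is_attention a.

Lemma resid_split :
  resid e t0 a = \sum_(t | t != t0) a t *: e t - (1 - a t0) *: e t0.
Proof.
rewrite /resid /Emul (bigD1 t0) //= scalerBl scale1r opprB.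
by rewrite addrAC addrC addrA.
Qed.

Lemma resid_sum_neq : resid e t0 a = \sum_(t | t != t0) a t *: (e t - e t0).
Proof.
rewrite resid_split -attention_sum_neq // scaler_suml -sumrB.
by apply: eq_bigr => t _; rewrite scalerBr.
Qed.

Lemma enorm_resid_le :
  enorm (resid e t0 a) <= (1 - a t0) * (Num.sqrt d%:R * coord_spread).
Proof.
have a_le1 : 0 <= 1 - a t0 by rewrite subr_ge0 attention_le1.
rewrite mulrCA; apply: enorm_le_coord => [|j]; first by rewrite mulr_ge0 ?coord_spread_ge0.
rewrite resid_sum_neq summxE -attention_sum_neq // mulr_suml.
apply: le_trans (ler_norm_sum _ _ _) _; apply: ler_sum => t _.
rewrite !mxE normrM ger0_norm ?attention_ge0 //.
by rewrite ler_wpM2l ?attention_ge0 ?coord_le_spread.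
Qed.

Lemma resid_scaled_hull : a t0 < 1 ->
  exists2 c, Defs.convC e t0 c & resid e t0 a = (1 - a t0) *: (c - e t0).
Proof.
rewrite -subr_gt0 => s_gt0; set s := 1 - a t0 in s_gt0 *.
pose lam t := if t != t0 then a t / s else 0.
exists (\sum_(t < T) lam t *: e t).
  exists lam; split; last split; last split.
  - by move=> t; rewrite /lam; case: ifP => // _; rewrite divr_ge0 ?attention_ge0 // ltW.
  - move=> t; rewrite /hull_index negb_and !negbK /lam.
    case/orP => [/eqP t_0|/eqP ->]; last by rewrite eqxx.
    by case: ifP => // _; case: a_att => a0 _; rewrite a0 ?mul0r.
  - by rewrite -big_mkcond -mulr_suml attention_sum_neq // divff ?gt_eqF.
  - by [].
rewrite resid_split scalerBr scaler_sumr; congr (_ - _).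
rewrite big_mkcond; apply: eq_bigr => t _; rewrite /lam.
case: ifP => _; last by rewrite scale0r scaler0.
by rewrite scalerA mulrCA divff ?mulr1 ?gt_eqF.
Qed.

Lemma resid_ge : (1 - a t0) * gamma e t0 <= enorm (resid e t0 a).
Proof.
have [a_lt1|a_ge1] := ltP (a t0) 1; last first.
  have -> : a t0 = 1 by apply/eqP; rewrite eq_le attention_le1.
  by rewrite subrr mul0r enorm_ge0.
have [c Cc ->] := resid_scaled_hull a_lt1.
have a_le1 : 0 <= 1 - a t0 by rewrite subr_ge0 ltW.
by rewrite enormZ -enormN opprB ger0_norm // ler_wpM2l // gamma_le_dist.
Qed.

End Residual.

Section Loss.
Variables (R : realType) (d T : nat) (e : 'I_T -> 'rV[R]_d) (t0 : 'I_T).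
Hypothesis gamma_gt0 : 0 < gamma e t0.

Lemma sqerr_cvg0P {I : Type} {F : set_system I} {FF : Filter F}
    (a : I -> 'I_T -> R) : (forall i, is_attention (a i)) ->
  sqerr e t0 (a i) @[i --> F] --> (0 : R) <-> a i t0 @[i --> F] --> (1 : R).
Proof.
move=> a_att; rewrite /sqerr.
rewrite (@cvg0_linear_bounds _ _ _ _ (fun i => enorm (resid e t0 (a i)) ^+ 2) _
  2^-1 2^-1) ?invr_gt0 // => [|i|i]; last 2 first.
- exact: sqr_ge0.
- by rewrite lexx.
rewrite sqr_cvg0P.
rewrite (@cvg0_linear_bounds _ _ _ _ (fun i => 1 - a i t0) _ (gamma e t0)
  (Num.sqrt d%:R * coord_spread e t0)) // => [|i|i]; last 2 first.
- by rewrite subr_ge0 attention_le1.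
- by rewrite resid_ge // enorm_resid_le.
exact: rsubr_cvg0.
Qed.

Lemma sqerr_neq0 a : is_attention a -> a t0 < 1 -> sqerr e t0 a != 0.
Proof.
move=> a_att a_lt1; rewrite /sqerr mulf_eq0 invr_eq0 pnatr_eq0 orbF expf_eq0 /=.
rewrite gt_eqF //; apply: lt_le_trans (resid_ge e t0 a_att).
by rewrite mulr_gt0 // subr_gt0.
Qed.

End Loss.

Section Softmax.
Variables (R : realType) (p T : nat) (x : nat -> 'rV[R]_p) (w : 'rV[R]_p).

Lemma softmax_denom_gt0 : (1 < T)%N -> 0 < \sum_(s < T.-1) expR (dotv w (x s)).
Proof.
move=> T_gt1; have T1_gt0 : (0 < T.-1)%N by rewrite -ltnS prednK // ltnW.
rewrite (bigD1 (Ordinal T1_gt0)) //= ltr_pwDl ?expR_gt0 //.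
by apply: sumr_ge0 => *; apply: expR_ge0.
Qed.

Lemma softmax_att_gt0 (t : 'I_T) :
  (1 < T)%N -> val t != 0%N -> 0 < softmax_att x w t.
Proof.
move=> T_gt1 t_neq0; rewrite /softmax_att (negPf t_neq0).
by rewrite divr_gt0 ?expR_gt0 ?softmax_denom_gt0.
Qed.

Lemma softmax_att_attention : (1 < T)%N -> is_attention (@softmax_att R p T x w).
Proof.
move=> T_gt1; split; last split.
- by move=> t /eqP t_eq0; rewrite /softmax_att t_eq0.
- move=> t; rewrite /softmax_att; case: ifP => // _.
  by rewrite divr_ge0 ?expR_ge0 // ltW // softmax_denom_gt0.
- move: T_gt1 (softmax_denom_gt0 T_gt1); case: T => [|[|n]] // _ denom_gt0.
  rewrite big_ord_recl /softmax_att /= add0r -mulr_suml.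
  by rewrite divff ?gt_eqF.
Qed.

End Softmax.

Theorem lemma4 (R : realType) (d T : nat) (e : 'I_T -> 'rV[R]_d)
  (t0 : 'I_T) (ht0 : (0 < nat_of_ord t0)%N) :
  (exists K : R, 0 < K /\
     forall a : 'I_T -> R, is_attention a ->
       enorm (resid e t0 a) <= (1 - a t0) * K /\
       (1 - a t0) * gamma e t0 <= enorm (resid e t0 a)) /\
  (0 < gamma e t0 ->
   forall (p : nat) (x : nat -> 'rV[R]_p),
     (forall ws : nat -> 'rV[R]_p,
        ((fun n => sqerr e t0 (@softmax_att R p T x (ws n))) @ \oo --> (0 : R)) <->
        ((fun n => @softmax_att R p T x (ws n) t0) @ \oo --> (1 : R))) /\
     (forall w : 'rV[R]_p, sqerr e t0 (@softmax_att R p T x w) <> 0)).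
Proof.
have T_gt1 : (1 < T)%N := leq_ltn_trans ht0 (ltn_ord t0).
have spread_ge0 : 0 <= Num.sqrt d%:R * coord_spread e t0.
  by rewrite mulr_ge0 ?sqrtr_ge0 ?coord_spread_ge0.
split.
  exists (1 + Num.sqrt d%:R * coord_spread e t0); split; first by rewrite ltr_pwDl.
  move=> a a_att; split; last exact: resid_ge.
  apply: le_trans (enorm_resid_le e t0 a_att) _.
  by rewrite ler_wpM2l ?subr_ge0 ?attention_le1 // lerDr.
move=> gamma_gt0 p x.
have att w := softmax_att_attention x w T_gt1.
have [t1 /andP[t1_neq0 t1_neq_t0]] := gamma_gt0_hull_index gamma_gt0.
split => [ws|w]; first exact: sqerr_cvg0P.
apply/eqP/sqerr_neq0 => //; apply: attention_lt1 t1_neq_t0 _ => //.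
exact: softmax_att_gt0.
Qed.
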